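(* Let $\mathfrak{s}$ be a simple Lie superalgebra. If $\mathfrak{s}=\bigoplus\mathfrak{s}^p$ is a grading of depth one and $\mathrm{der}(\mathfrak{s})=\bigoplus \mathrm{der}^p(\mathfrak{s})$ the associated grading of $\mathrm{der}(\mathfrak{s})$, then: (i) if $x\in\mathrm{der}^p(\mathfrak{s})$, $p\geq 0$, satisfies $[x,\mathfrak{s}^{-1}]=(0)$ then $x=0$; (ii) $\mathfrak{s}^0$ and $\mathfrak{s}^1$ are nonzero; (iii) the adjoint action of $\mathfrak{s}^{0}$ on $\mathfrak{s}^{-1}$ is irreducible of $G$-type; (iv) the depth $d(\mathrm{der}(\mathfrak{s}))\geq d(\mathfrak{s})$ and if the grading operator $D\in\mathfrak{h}$ then $d(\mathrm{der}(\mathfrak{s}))=d(\mathfrak{s})$; (v) if $x\in\mathfrak{s}^{-1}$ satisfies $[\mathfrak{s}^{0},x]=(0)$ then $x=0$.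
   Context: $\mathfrak{s}$ is a finite-dimensional complex simple Lie superalgebra with $\mathrm{der}(\mathfrak{s})=\mathfrak{s}\rtimes\mathrm{out}(\mathfrak{s})$ (semidirect sum with the inner derivations $\mathfrak{s}$ as ideal and a subalgebra $\mathrm{out}(\mathfrak{s})$ of outer derivations). A maximal torus of $\mathfrak{s}$ is conjugate to $\mathfrak{t}_{\mathfrak{s}}=\mathfrak{h}\oplus\mathfrak{t}_o$ with $\mathfrak{h}$ maximal toric in $\mathfrak{s}_{\bar 0}$ and $\mathfrak{t}_o$ maximal toric in $\mathrm{out}_{\bar 0}(\mathfrak{s})$; gradings correspond to grading operators $D\in\mathfrak{t}_{\mathfrak{s}}$. A grading has depth $d$ if $\mathfrak{s}^{-d}\neq0$ and $\mathfrak{s}^{p}=0$ for $p<-d$. A representation is irreducible of $G$-type if it has no nontrivial submodule, $\mathbb{Z}_2$-graded or not. *)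

From HB Require Import structures.
From mathcomp Require Import all_boot all_order all_algebra.
From mathcomp Require Import complex reals.
Set Implicit Arguments. Unset Strict Implicit. Unset Printing Implicit Defensive.
Import Order.TTheory GRing.Theory Num.Theory.
Local Open Scope ring_scope.


Section LieSuper.
Variables (K : fieldType) (V : vectType K).
Variables (V0 V1 : {vspace V}) (br : V -> V -> V).

Definition par (i : bool) : {vspace V} := if i then V1 else V0.

Definition ssign (i j : bool) : K := (-1) ^+ (i && j).

Definition is_lie_superalgebra : Prop :=
  [/\ directv (V0 + V1)%VS, (V0 + V1)%VS = fullv,
      (forall a x y z, br (a *: x + y) z = a *: br x z + br y z) &
  [/\ 
      (forall a x y z, br x (a *: y + z) = a *: br x y + br x z),
      (forall i j x y, x \in par i -> y \in par j -> br x y \in par (i (+) j)),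
      (forall i j x y, x \in par i -> y \in par j -> br x y = - (ssign i j *: br y x)) &
      (forall i j x y z, x \in par i -> y \in par j ->
         br x (br y z) = br (br x y) z + ssign i j *: br y (br x z))]].

Definition homogeneous (I : {vspace V}) : Prop :=
  I = ((I :&: V0) + (I :&: V1))%VS.

Definition is_simple : Prop :=
  (exists x y, br x y != 0) /\
  forall I : {vspace V}, homogeneous I ->
    (forall x y, y \in I -> br x y \in I) -> I = 0%VS \/ I = fullv.

Definition is_sder (e : bool) (f : 'End(V)) : Prop :=
  (forall i v, v \in par i -> f v \in par (i (+) e)) /\
  (forall i x y, x \in par i ->
     f (br x y) = br (f x) y + ssign e i *: br x (f y)).

Definition P (i : bool) : 'End(V) := if i then daddv_pi V1 V0 else daddv_pi V0 V1.
Definition ecomp (e : bool) (f : 'End(V)) : 'End(V) :=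
  \sum_(i : bool) (P (i (+) e) \o f \o P i)%VF.

(* der(s): endomorphisms whose even part is an even superderivation and whose
   odd part is an odd superderivation (= span of homogeneous superderivations) *)
Definition is_der (f : 'End(V)) : Prop :=
  f = ecomp false f + ecomp true f /\ is_sder false (ecomp false f) /\ is_sder true (ecomp true f).

Definition sbr (f g : 'End(V)) : 'End(V) :=
  \sum_(i : bool) \sum_(j : bool)
    ((ecomp i f \o ecomp j g)%VF - ssign i j *: (ecomp j g \o ecomp i f)%VF).

Definition ad (y : V) : 'End(V) := linfun (br y).

Definition eigsp (f : 'End(V)) (a : K) : {vspace V} := lker (f - a *: \1%VF).

Definition is_grading_operator (D : 'End(V)) : Prop :=
  is_sder false D /\
  exists r : seq int, (fullv <= \sum_(p <- r) eigsp D (p%:~R))%VS.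

Definition gcomp (D : 'End(V)) (p : int) : {vspace V} := eigsp D (p%:~R).

Definition has_depth (D : 'End(V)) (d : int) : Prop :=
  gcomp D (- d) != 0%VS /\ forall p : int, p < - d -> gcomp D p = 0%VS.

Definition in_der_deg (D : 'End(V)) (p : int) (f : 'End(V)) : Prop :=
  is_der f /\ forall (q : int) v, v \in gcomp D q -> f v \in gcomp D (q + p).

Definition der_has_depth (D : 'End(V)) (d : int) : Prop :=
  (exists f, in_der_deg D (- d) f /\ f != 0) /\
  forall p : int, p < - d -> forall f, in_der_deg D p f -> f = 0.

(* the grading operator lies in h, i.e. it is inner: D = ad h with h even *)
Definition inner_grading (D : 'End(V)) : Prop :=
  exists h, h \in V0 /\ forall v, D v = br h v.

(* irreducible of G-type: nonzero and no nontrivial invariant subspace,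
   Z_2-graded or not, for the adjoint action of A on M *)
Definition irreducible_G (A M : {vspace V}) : Prop :=
  M != 0%VS /\
  forall W : {vspace V}, (W <= M)%VS ->
    (forall a w, a \in A -> w \in W -> br a w \in W) -> W = 0%VS \/ W = M.

End LieSuper.

From HB Require Import structures.
From mathcomp Require Import all_boot all_order all_algebra.
From mathcomp Require Import complex reals.
From mathcomp Require Import zify.
From Stdlib Require Import Classical.
Import Order.TTheory GRing.Theory Num.Theory.
Local Open Scope ring_scope.
Set Implicit Arguments. Unset Strict Implicit. Unset Printing Implicit Defensive.

(* The heart of the proof is a transitivity property of depth-one gradings: an
   element w of nonnegative degree with [s^-1, w] = 0 vanishes.  The ideal generated
   by w is reached by repeatedly bracketing with the nonnegative part s^{>=0}, because
   the Jacobi identity moves s^-1 past such brackets; hence it lies in s^{>=0}, so it is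
   a proper ideal and must be zero.  Simplicity is only assumed for Z/2-graded ideals;
   it extends to all ideals since, for the parity automorphism sigma, I + sigma I and
   I :&: sigma I are graded, and s = I (+) sigma I would force s to be abelian.  The
   irreducibility of s^-1 follows from the same closure argument started from an
   s^0-submodule; the nonvanishing of s^0 and s^1 and the statements on derivations
   reduce to transitivity by induction on the degree. *)

Section VectorSpaces.
Variables (K : fieldType) (V : vectType K).

Lemma memv_big_ind (I : eqType) (r : seq I) (Pr : pred I) (U : I -> {vspace V})
    (Q : V -> Prop) :
  Q 0 -> (forall u v, Q u -> Q v -> Q (u + v)) ->
  (forall i, i \in r -> Pr i -> forall u, u \in U i -> Q u) ->
  forall u, u \in (\sum_(i <- r | Pr i) U i)%VS -> Q u.
Proof.
move=> Q0 QD QU; rewrite big_seq_cond.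
elim/big_ind: _ => [u|X Y QX QY u|i /andP[ri Pri]]; last exact: QU.
  by rewrite memv0 => /eqP ->.
by case/memv_addP => x /QX Qx [y /QY Qy ->]; apply: QD.
Qed.

Lemma mem_eigsp (f : 'End(V)) a v : (v \in eigsp f a) = (f v == a *: v).
Proof.
by rewrite memv_ker add_lfunE opp_lfunE scale_lfunE id_lfunE subr_eq0.
Qed.

Lemma eigsp_sum_eq0 (f : 'End(V)) a (l : seq K) v :
  a \notin l -> v \in eigsp f a -> v \in (\sum_(b <- l) eigsp f b)%VS -> v = 0.
Proof.
elim: l v => [|b l IHl] v; first by rewrite big_nil memv0 => _ _ /eqP.
rewrite inE negb_or big_cons => /andP[ab al] fav /memv_addP[u fbu [w lw vE]].
pose g : 'End(V) := (f - b *: \1)%VF.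
have gE c x : x \in eigsp f c -> g x = (c - b) *: x.
  rewrite mem_eigsp => /eqP fx.
  by rewrite add_lfunE opp_lfunE scale_lfunE id_lfunE fx scalerBl.
have g_sum : g w \in (\sum_(c <- l) eigsp f c)%VS.
  move: (w) lw; apply: memv_big_ind => [|x y gx gy|c cl _ x fcx].
  - by rewrite linear0 mem0v.
  - by rewrite linearD rpredD.
  - rewrite (gE c x fcx) rpredZ // (big_rem c cl) /=.
    exact: (subvP (addvSl _ _)).
have : (a - b) *: v = 0.
  apply: IHl al _ _; first by rewrite rpredZ.
  by rewrite -(gE a v fav) vE linearD /= (gE b u fbu) subrr scale0r add0r.
by move/eqP; rewrite scaler_eq0 subr_eq0 (negbTE ab) => /eqP.
Qed.

Lemma iter_dimv_fixed (f : {vspace V} -> {vspace V}) (S : {vspace V}) :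
  (forall U, (U <= f U)%VS) -> f (iter (\dim {:V}) f S) = iter (\dim {:V}) f S.
Proof.
move=> fS; have grow m : f (iter m f S) = iter m f S \/ (m <= \dim (iter m f S))%N.
  elim: m => [|m [fixed|dim_m]] /=; [by right | by left; rewrite fixed |].
  have [fixed|moved] := eqVneq (f (iter m f S)) (iter m f S).
    by left; rewrite fixed.
  right; apply: leq_ltn_trans dim_m _.
  by rewrite (ltn_leqif (dimv_leqif_eq (fS _))) eq_sym.
have [//|dim_full] := grow (\dim {:V}).
have -> : iter (\dim {:V}) f S = fullv by apply/eqP; rewrite eqEdim subvf.
by apply/eqP; rewrite eqEsubv subvf fS.
Qed.
End VectorSpaces.

Lemma bounded_has_max (Pn : nat -> Prop) n0 B :
  Pn n0 -> (forall n, Pn n -> (n <= B)%N) ->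
  exists d, Pn d /\ forall n, Pn n -> (n <= d)%N.
Proof.
move=> Pn0; elim: B => [|B IHB] leB.
  by exists n0; split=> // n /leB; rewrite leqn0 => /eqP ->.
have [PB|nPB] := classic (Pn B.+1); first by exists B.+1.
apply: IHB => n Pn_n; rewrite -ltnS ltn_neqAle leB // andbT.
by apply/eqP=> nB; apply: nPB; rewrite -nB.
Qed.

(* Keeps [/=] from unfolding the parity projections at concrete parities. *)
#[local] Arguments P : simpl never.

Section LieSuperalgebra.
Variables (K : numFieldType) (V : vectType K) (V0 V1 : {vspace V}) (br : V -> V -> V).
Hypothesis lieV : is_lie_superalgebra V0 V1 br.

Local Notation par := (par V0 V1).
Local Notation pr := (P V0 V1).
Local Notation ssign := (ssign K).

Lemma br_linear_l y : linear (br^~ y).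
Proof. by case: lieV => _ _ linl _ a u v; rewrite linl. Qed.

Lemma br_linear_r x : linear (br x).
Proof. by case: lieV => _ _ _ [linr _ _ _] a u v; rewrite linr. Qed.

Lemma br_par i j x y : x \in par i -> y \in par j -> br x y \in par (i (+) j).
Proof. by case: lieV => _ _ _ [_ brp _ _]; apply: brp. Qed.

Lemma br_skew i j x y :
  x \in par i -> y \in par j -> br x y = - (ssign i j *: br y x).
Proof. by case: lieV => _ _ _ [_ _ skew _]; apply: skew. Qed.

Lemma br_jacobi i j x y : x \in par i -> y \in par j -> forall z,
  br x (br y z) = br (br x y) z + ssign i j *: br y (br x z).
Proof. by case: lieV => _ _ _ [_ _ _ jac] xi yj z; apply: jac. Qed.

Definition br_l y : {linear V -> V} :=
  HB.pack (br^~ y) (GRing.isLinear.Build K V V *:%R (br^~ y) (br_linear_l y)).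
Definition br_r x : {linear V -> V} :=
  HB.pack (br x) (GRing.isLinear.Build K V V *:%R (br x) (br_linear_r x)).

Lemma adE x v : ad br x v = br x v. Proof. exact: (lfunE (br_r x)). Qed.

Lemma br0l y : br 0 y = 0. Proof. exact: (linear0 (br_l y)). Qed.
Lemma brDl y u v : br (u + v) y = br u y + br v y. Proof. exact: (linearD (br_l y)). Qed.
Lemma brNl y u : br (- u) y = - br u y. Proof. exact: (linearN (br_l y)). Qed.
Lemma brZl y a u : br (a *: u) y = a *: br u y. Proof. exact: (linearZZ (br_l y)). Qed.
Lemma br_suml y (I : Type) (r : seq I) (Q : pred I) F :
  br (\sum_(i <- r | Q i) F i) y = \sum_(i <- r | Q i) br (F i) y.
Proof. exact: (linear_sum (br_l y)). Qed.

Lemma br0r x : br x 0 = 0. Proof. exact: (linear0 (br_r x)). Qed.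
Lemma brDr x u v : br x (u + v) = br x u + br x v. Proof. exact: (linearD (br_r x)). Qed.
Lemma brNr x u : br x (- u) = - br x u. Proof. exact: (linearN (br_r x)). Qed.
Lemma brBr x u v : br x (u - v) = br x u - br x v. Proof. exact: (linearB (br_r x)). Qed.
Lemma brZr x a u : br x (a *: u) = a *: br x u. Proof. exact: (linearZZ (br_r x)). Qed.

Lemma ssign_neq0 i j : ssign i j != 0.
Proof. by rewrite expf_neq0 // oppr_eq0 oner_eq0. Qed.

Lemma ssign_even i : ssign i false = 1.
Proof. by rewrite /ssign andbF. Qed.

Lemma pr_mem i v : pr i v \in par i.
Proof. by case: i; apply: memv_pi. Qed.

Lemma pr_sum v : pr false v + pr true v = v.
Proof.
case: lieV => /directv_addP par_cap par_full _ _.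
by rewrite /P daddv_pi_add ?par_cap // par_full memvf.
Qed.

Lemma pr_id i v : v \in par i -> pr i v = v.
Proof.
case: lieV => /directv_addP par_cap _ _ _.
by case: i => /= vi; rewrite /P daddv_pi_id // capvC.
Qed.

Lemma pr_eq0 i v : v \in par (~~ i) -> pr i v = 0.
Proof.
move=> vi; have := pr_sum v.
case: i vi => vi; rewrite (pr_id vi).
  by move/(canRL (addKr v)); rewrite addNr.
by move/(canRL (addrK v)); rewrite subrr.
Qed.

Lemma prE i j v : v \in par j -> pr i v = if i == j then v else 0.
Proof.
case: eqP => [-> | /eqP ij]; first exact: pr_id.
by move=> vj; apply: pr_eq0; case: i j ij vj => [] [].
Qed.

Lemma pr_sum_eq0 i u v :
  u \in par i -> v \in par (~~ i) -> u + v = 0 -> u = 0 /\ v = 0.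
Proof.
move=> ui vi uv0; have := congr1 (pr i) uv0.
rewrite linearD /= (pr_id ui) (pr_eq0 vi) addr0 linear0 => u0.
by move: uv0; rewrite u0 add0r.
Qed.

Lemma br_eq0_pr x y : (forall i j, br (pr i x) (pr j y) = 0) -> br x y = 0.
Proof. by move=> xy0; rewrite -[x]pr_sum -[y]pr_sum !(brDl, brDr) !xy0 !addr0. Qed.

Lemma br_eq0C i j x y : x \in par i -> y \in par j -> br x y = 0 -> br y x = 0.
Proof.
by move=> xi yj xy0; rewrite (br_skew yj xi) xy0 scaler0 oppr0.
Qed.

Lemma br_pr_l_eq0 i j x y : y \in par j -> br x y = 0 -> br (pr i x) y = 0.
Proof.
move=> yj; rewrite -{1}[x]pr_sum brDl.
have := br_par (pr_mem false x) yj; have := br_par (pr_mem true x) yj.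
rewrite addTb => x1y x0y /(pr_sum_eq0 x0y x1y) [].
by case: i.
Qed.

Lemma br_pr_r_eq0 i j x y : x \in par i -> br x y = 0 -> br x (pr j y) = 0.
Proof.
move=> xi; rewrite -{1}[y]pr_sum brDr.
have := br_par xi (pr_mem false y); have := br_par xi (pr_mem true y).
rewrite addbF addbT => xy1 xy0 /(pr_sum_eq0 xy0 xy1) [].
by case: j.
Qed.

Definition parity_aut : 'End(V) := (pr false - pr true)%R.
Local Notation sigma := parity_aut.

Lemma parity_autD v : sigma v = pr false v - pr true v.
Proof. by rewrite add_lfunE opp_lfunE. Qed.

Lemma parity_aut_even v : v \in par false -> sigma v = v.
Proof. by move=> v0; rewrite parity_autD (prE false v0) (prE true v0) /= subr0. Qed.

Lemma parity_aut_odd v : v \in par true -> sigma v = - v.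
Proof. by move=> v1; rewrite parity_autD (prE false v1) (prE true v1) /= sub0r. Qed.

Lemma parity_autK : involutive sigma.
Proof.
move=> v; rewrite [sigma v]parity_autD linearB /=.
by rewrite parity_aut_even ?parity_aut_odd ?pr_mem // opprK pr_sum.
Qed.

Lemma pr_parity_aut i v : pr i (sigma v) = if i then - pr i v else pr i v.
Proof.
rewrite parity_autD linearB /= (prE i (pr_mem false v)) (prE i (pr_mem true v)).
by case: i; rewrite /= ?sub0r ?subr0.
Qed.

Lemma parity_aut_br x y : sigma (br x y) = br (sigma x) (sigma y).
Proof.
have homog i j : sigma (br (pr i x) (pr j y)) = br (sigma (pr i x)) (sigma (pr j y)).
  have xy := br_par (pr_mem i x) (pr_mem j y).
  case: i j xy => [] [] /= xy;
    rewrite ?(parity_aut_even xy) ?(parity_aut_odd xy);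
    rewrite ?(parity_aut_even (pr_mem false x)) ?(parity_aut_odd (pr_mem true x));
    rewrite ?(parity_aut_even (pr_mem false y)) ?(parity_aut_odd (pr_mem true y));
    by rewrite ?brNl ?brNr ?opprK.
by rewrite -[x]pr_sum -[y]pr_sum !linearD /= !(brDl, brDr) !linearD /= !homog.
Qed.

Lemma parity_aut_ideal (I : {vspace V}) : (forall x y, y \in I -> br x y \in I) ->
  forall x y, y \in (sigma @: I)%VS -> br x y \in (sigma @: I)%VS.
Proof.
move=> idI x _ /memv_imgP[b bI ->].
by rewrite -[x]parity_autK -parity_aut_br memv_img ?idI.
Qed.

Lemma pr_even_half v : pr false v = 2^-1 *: (v + sigma v).
Proof.
have -> : v + sigma v = pr false v *+ 2.
  by rewrite parity_autD -{1}(pr_sum v) addrACA subrr addr0.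
by rewrite -scaler_nat scalerA mulVf ?scale1r // pnatr_eq0.
Qed.

Lemma homogeneous_parity_aut (J : {vspace V}) :
  (forall w, w \in J -> sigma w \in J) -> homogeneous V0 V1 J.
Proof.
move=> sJ; apply: subv_anti; rewrite subv_add !capvSl !andbT.
apply/subvP => w wJ.
have pr0J : pr false w \in J by rewrite pr_even_half rpredZ // rpredD ?sJ.
have pr1J : pr true w \in J.
  by rewrite -(addKr (pr false w) (pr true w)) pr_sum rpredD ?rpredN.
rewrite -[w]pr_sum memv_add // memv_cap ?pr0J ?pr1J /=.
  exact: (pr_mem false w).
exact: (pr_mem true w).
Qed.

Lemma br_evenC a z : z \in par false -> br a z = - br z a.
Proof.
move=> z0; rewrite -[a]pr_sum brDl brDr opprD.
rewrite (br_skew (pr_mem false a) z0) (br_skew (pr_mem true a) z0).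
by rewrite !ssign_even !scale1r.
Qed.

Lemma br_oddC a z : z \in par true -> br a z = - br z (sigma a).
Proof.
move=> z1; rewrite parity_autD -{1}[a]pr_sum brDl brBr opprB.
rewrite (br_skew (pr_mem false a) z1) (br_skew (pr_mem true a) z1).
by rewrite /ssign /= expr0 expr1 scale1r scaleN1r opprK addrC.
Qed.

Section TwistedComplement.
Variable I : {vspace V}.
Hypothesis idealI : forall x y, y \in I -> br x y \in I.
Hypothesis I_sI_full : (I + sigma @: I)%VS = fullv.
Hypothesis I_sI_cap : (I :&: sigma @: I)%VS = 0%VS.

Lemma twisted_pr_br_eq0 a b : a \in I -> b \in I ->
  br (pr false b) a = 0 /\ br (pr true b) (sigma a) = 0.
Proof.
move=> aI bI.
have in_cap w : w \in I -> w \in (sigma @: I)%VS -> w = 0.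
  by move=> wI wsI; apply/eqP; rewrite -memv0 -I_sI_cap memv_cap wI.
have saI : sigma a \in (sigma @: I)%VS := memv_img sigma aI.
have brab : br a b = - br (pr false b) a - br (pr true b) (sigma a).
  by rewrite -{1}[b]pr_sum brDr (br_evenC _ (pr_mem _ _)) (br_oddC _ (pr_mem _ _)).
have brasb : br a (sigma b) = - br (pr false b) a + br (pr true b) (sigma a).
  by rewrite parity_autD brBr (br_evenC _ (pr_mem _ _)) (br_oddC _ (pr_mem _ _)) opprK.
have odd0 : br (pr true b) (sigma a) = 0.
  apply: in_cap; last exact: parity_aut_ideal idealI _ _ saI.
  have -> : br (pr true b) (sigma a) = - br a b - br (pr false b) a.
    by rewrite brab opprB opprK addrK.
  by rewrite rpredB ?rpredN ?idealI.
split => //; apply: in_cap; first exact: idealI.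
have -> : br (pr false b) a = - br a (sigma b) by rewrite brasb odd0 addr0 opprK.
by rewrite rpredN (parity_aut_ideal idealI) // memv_img.
Qed.

Lemma twisted_homog_br_eq0 i v a : a \in I ->
  br (pr i v) a = 0 /\ br (pr i v) (sigma a) = 0.
Proof.
move=> aI; have : v \in (I + sigma @: I)%VS by rewrite I_sI_full memvf.
case/memv_addP => c cI [_ /memv_imgP[b bI ->] ->].
case: i.
  have [_ odd0] := twisted_pr_br_eq0 aI (rpredB cI bI).
  have -> : pr true (c + sigma b) = pr true (c - b).
    by rewrite !linearD /= pr_parity_aut linearN.
  split => //; apply/eqP; rewrite -oppr_eq0 -brNl -(parity_aut_odd (pr_mem true _)).
  by rewrite -[a]parity_autK -parity_aut_br odd0 linear0.
have [even0 _] := twisted_pr_br_eq0 aI (rpredD cI bI).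
have -> : pr false (c + sigma b) = pr false (c + b).
  by rewrite !linearD /= pr_parity_aut.
split => //.
by rewrite -[pr false _]parity_aut_even ?pr_mem // -parity_aut_br even0 linear0.
Qed.

Lemma twisted_complement_abelian x y : br x y = 0.
Proof.
have : y \in (I + sigma @: I)%VS by rewrite I_sI_full memvf.
case/memv_addP => a aI [_ /memv_imgP[b bI ->] ->].
rewrite -[x]pr_sum !(brDl, brDr).
have [-> _] := twisted_homog_br_eq0 false x aI.
have [-> _] := twisted_homog_br_eq0 true x aI.
have [_ ->] := twisted_homog_br_eq0 false x bI.
have [_ ->] := twisted_homog_br_eq0 true x bI.
by rewrite !addr0.
Qed.
End TwistedComplement.

Section Simple.
Hypothesis simpleV : is_simple V0 V1 br.

Lemma nonabelian : exists x y, br x y != 0.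
Proof. by case: simpleV. Qed.

Lemma parity_stable_ideal_trivial (J : {vspace V}) :
  (forall w, w \in J -> sigma w \in J) -> (forall x y, y \in J -> br x y \in J) ->
  J = 0%VS \/ J = fullv.
Proof. by case: simpleV => _ simple sJ; apply/simple/homogeneous_parity_aut. Qed.

Lemma ideal_trivial (I : {vspace V}) :
  (forall x y, y \in I -> br x y \in I) -> I = 0%VS \/ I = fullv.
Proof.
move=> idI; have sIid := parity_aut_ideal idI.
have mem_sI w : w \in I -> sigma w \in (sigma @: I)%VS by apply: memv_img.
have sI_mem w : w \in (sigma @: I)%VS -> sigma w \in I.
  by case/memv_imgP => a aI ->; rewrite parity_autK.
have [sum0|sumT] : (I + sigma @: I)%VS = 0%VS \/ (I + sigma @: I)%VS = fullv.
  apply: parity_stable_ideal_trivial => [_|x _] /memv_addP[a aI [b bI ->]].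
    by rewrite linearD /= addrC memv_add ?sI_mem ?mem_sI.
  by rewrite brDr memv_add ?idI ?sIid.
  by left; apply/eqP; rewrite -subv0 -sum0 addvSl.
have [cap0|capT] : (I :&: sigma @: I)%VS = 0%VS \/ (I :&: sigma @: I)%VS = fullv.
  apply: parity_stable_ideal_trivial => [w|x y]; rewrite !memv_cap => /andP[wI wsI].
    by rewrite sI_mem ?mem_sI.
  by rewrite idI ?sIid.
  have [x [y]] := nonabelian.
  by rewrite (twisted_complement_abelian idI sumT cap0) eqxx.
by right; apply/eqP; rewrite eqEsubv subvf -capT capvSl.
Qed.

Lemma center_trivial_r z : (forall x, br x z = 0) -> z = 0.
Proof.
move=> z_central.
have [z0|zT] : <[z]>%VS = 0%VS \/ <[z]>%VS = fullv.
  by apply: ideal_trivial => x _ /vlineP[k ->]; rewrite brZr z_central scaler0 mem0v.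
  by apply/eqP; rewrite -memv0 -z0 memv_line.
have [x [y]] := nonabelian.
have : y \in <[z]>%VS by rewrite zT memvf.
by case/vlineP => k ->; rewrite brZr z_central scaler0 eqxx.
Qed.

Lemma center_trivial_l z : (forall v, br z v = 0) -> z = 0.
Proof.
move=> z_central; apply: center_trivial_r => v; apply: br_eq0_pr => i j.
apply: (br_eq0C (pr_mem _ _) (pr_mem _ _)).
exact: br_pr_l_eq0 (pr_mem _ _) (z_central _).
Qed.

Lemma ad_neq0 y : y != 0 -> ad br y != 0.
Proof.
apply: contra => /eqP ady0; apply/eqP/center_trivial_l => v.
by rewrite -adE ady0 zero_lfunE.
Qed.
End Simple.

Definition brv (U S : {vspace V}) : {vspace V} :=
  (\sum_(b <- vbasis U) (ad br b @: S))%VS.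

Lemma memv_brv (U S : {vspace V}) u v : u \in U -> v \in S -> br u v \in brv U S.
Proof.
move=> uU vS; rewrite (coord_vbasis uU) br_suml; apply: rpred_sum => i _.
rewrite brZl rpredZ // /brv (big_rem _ (memt_nth 0 _ (ltn_ord i))) /=.
by apply: (subvP (addvSl _ _)); rewrite -adE memv_img.
Qed.

Lemma brv_ind (U S : {vspace V}) (Q : V -> Prop) :
  Q 0 -> (forall u v, Q u -> Q v -> Q (u + v)) ->
  (forall u v, u \in U -> v \in S -> Q (br u v)) -> forall w, w \in brv U S -> Q w.
Proof.
move=> Q0 QD Qbr; apply: memv_big_ind => // b bU _ _ /memv_imgP[v vS ->].
by rewrite adE; apply: Qbr; first exact: vbasis_mem.
Qed.

Local Notation ecomp := (ecomp V0 V1).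

Lemma ecomp_sum (f : 'End(V)) : ecomp false f + ecomp true f = f.
Proof.
apply/lfunP => v; rewrite add_lfunE !sum_lfunE !big_bool !comp_lfunE /=.
by rewrite addrACA [pr true _ + _]addrC !pr_sum -linearD /= addrC pr_sum.
Qed.

Lemma pr_br_homog i u :
  u \in par i -> forall j y, pr j (br y u) = br (pr (j (+) i) y) u.
Proof.
move=> ui j y; rewrite -{1}[y]pr_sum brDl linearD /=.
rewrite (prE j (br_par (pr_mem false y) ui)) (prE j (br_par (pr_mem true y) ui)).
by case: i j {ui} => [] [] /=; rewrite ?addr0 ?add0r.
Qed.

Lemma ecomp_ad e y : ecomp e (ad br y) = ad br (pr e y).
Proof.
have parity_e i : i (+) e (+) i = e by case: i; case: e.
apply/lfunP => v; rewrite sum_lfunE big_bool !comp_lfunE !adE.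
by rewrite !(pr_br_homog (pr_mem _ _)) !parity_e /= -brDr addrC pr_sum.
Qed.

Lemma ad_sder e z : z \in par e -> is_sder V0 V1 br e (ad br z).
Proof.
move=> ze; split=> [i v vi|i x y xi]; rewrite !adE.
  by rewrite addbC; apply: br_par.
exact: br_jacobi.
Qed.

Lemma ad_der y : is_der V0 V1 br (ad br y).
Proof.
split; first by rewrite ecomp_sum.
by rewrite !ecomp_ad; split; apply/ad_sder/pr_mem.
Qed.

Lemma sbr_ad (x : 'End(V)) y v :
  is_der V0 V1 br x -> sbr V0 V1 x (ad br y) v = br (x y) v.
Proof.
case=> _ [x0 x1]; have x_sder i : is_sder V0 V1 br i (ecomp i x) by case: i.
have term i j : ((ecomp i x \o ecomp j (ad br y))%VF
    - ssign i j *: (ecomp j (ad br y) \o ecomp i x)%VF) v = br (ecomp i x (pr j y)) v.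
  rewrite add_lfunE opp_lfunE scale_lfunE !comp_lfunE !ecomp_ad !adE.
  by have [_ xi_br] := x_sder i; rewrite (xi_br j) ?pr_mem // addrK.
rewrite /sbr sum_lfunE big_bool !sum_lfunE !big_bool !term /= -!brDl.
congr (br _ v).
by rewrite -!linearD /= [pr true y + _]addrC pr_sum -add_lfunE addrC ecomp_sum.
Qed.

Lemma der_br_even (f : 'End(V)) h v : is_der V0 V1 br f -> h \in par false ->
  f (br h v) = br (f h) v + br h (f v).
Proof.
case=> _ [f0 f1] h0.
rewrite -[f]ecomp_sum !add_lfunE (f0.2 _ _ _ h0) (f1.2 _ _ _ h0).
by rewrite !ssign_even !scale1r brDl brDr addrACA.
Qed.

Section Grading.
Variables (D : 'End(V)) (r : seq int).
Hypothesis Dder : is_sder V0 V1 br false D.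
Hypothesis Dspec : (fullv <= \sum_(p <- r) eigsp D p%:~R)%VS.
Hypothesis depthD : has_depth D 1.

Local Notation s q := (gcomp D q).

Lemma gcomp_m1_neq0 : s (- 1) != 0%VS.
Proof. by case: depthD. Qed.

Lemma gcomp_lt_m1 p : p < - 1 -> s p = 0%VS.
Proof. by case: depthD => _; apply. Qed.

Lemma gcompE q v : v \in s q -> D v = q%:~R *: v.
Proof. by rewrite mem_eigsp => /eqP. Qed.

Lemma gcomp_eq0 q : q \notin r -> s q = 0%VS.
Proof.
move=> qr; apply/eqP; rewrite -subv0; apply/subvP => v vq; rewrite memv0.
apply/eqP; apply: (eigsp_sum_eq0 (l := map intr r)) vq _.
  by apply: contra qr => /mapP[p pr /intr_inj ->].
by rewrite big_map (subvP Dspec) ?memvf.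
Qed.

Lemma gcomp_ind (Q : V -> Prop) : Q 0 -> (forall u v, Q u -> Q v -> Q (u + v)) ->
  (forall q v, v \in s q -> Q v) -> forall v, Q v.
Proof.
move=> Q0 QD Qs v; apply: (memv_big_ind Q0 QD) (subvP Dspec v (memvf v)).
by move=> q _ _; apply: Qs.
Qed.

Lemma D_br x y : D (br x y) = br (D x) y + br x (D y).
Proof.
rewrite -{1}[x]pr_sum brDl linearD /=.
rewrite (Dder.2 _ _ _ (pr_mem false x)) (Dder.2 _ _ _ (pr_mem true x)).
by rewrite !ssign_even !scale1r addrACA -!brDl -linearD /= pr_sum.
Qed.

Lemma pr_D i v : pr i (D v) = D (pr i v).
Proof.
rewrite -{1}[v]pr_sum linearD /= linearD /=.
have D_par j : D (pr j v) \in par j by have := Dder.1 j _ (pr_mem j v); rewrite addbF.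
rewrite (prE i (D_par false)) (prE i (D_par true)).
by case: i; rewrite /= ?addr0 ?add0r.
Qed.

Lemma pr_gcomp i q v : v \in s q -> pr i v \in s q.
Proof. by rewrite !mem_eigsp -pr_D => /eqP ->; rewrite linearZ. Qed.

Lemma br_gcomp p q x y : x \in s p -> y \in s q -> br x y \in s (p + q).
Proof.
move=> xp yq; rewrite mem_eigsp D_br (gcompE xp) (gcompE yq) brZl brZr.
by rewrite rmorphD scalerDl.
Qed.

Lemma gcomp_pr_ind q (Q : V -> Prop) : (forall u v, Q u -> Q v -> Q (u + v)) ->
  (forall i v, v \in s q -> v \in par i -> Q v) -> forall v, v \in s q -> Q v.
Proof.
move=> QD Qi v vq; rewrite -[v]pr_sum.
apply: QD; [apply: (Qi false) | apply: (Qi true)]; by [apply: pr_gcomp | apply: pr_mem].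
Qed.

Definition gpos : {vspace V} := (\sum_(q <- r | (0 <= q)%R) s q)%VS.

Lemma gcomp_gpos q : 0 <= q -> (s q <= gpos)%VS.
Proof.
move=> q_ge0; have [qr|/gcomp_eq0 ->] := boolP (q \in r); last exact: sub0v.
by rewrite /gpos (big_rem q qr) /= q_ge0 addvSl.
Qed.

Lemma gpos_ind (Q : V -> Prop) : Q 0 -> (forall u v, Q u -> Q v -> Q (u + v)) ->
  (forall q, 0 <= q -> forall v, v \in s q -> Q v) -> forall v, v \in gpos -> Q v.
Proof. by move=> Q0 QD Qs; apply: memv_big_ind => // q _; apply: Qs. Qed.

Lemma gcomp_m1_gpos v : v \in s (- 1) -> v \in gpos -> v = 0.
Proof.
move=> vm1 vpos; apply: (eigsp_sum_eq0 (l := [seq p%:~R | p <- r & 0 <= p])) vm1 _.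
  by apply/mapP => -[p]; rewrite mem_filter => /andP[p_ge0 _] /intr_inj; lia.
by rewrite big_map big_filter.
Qed.

Lemma gcomp_m1_gpos_full : (s (- 1) + gpos)%VS = fullv.
Proof.
apply/eqP; rewrite eqEsubv subvf /=; apply/subvP => v _; move: v.
apply: gcomp_ind => [|u v uS vS|q v vq].
- exact: mem0v.
- exact: rpredD.
have [q_lt|q_ge] := ltrP q (- 1).
  by move: vq; rewrite gcomp_lt_m1 // memv0 => /eqP ->; apply: mem0v.
have [qm1|q_ne] := eqVneq q (- 1); first by rewrite -[v]addr0 memv_add ?mem0v // -qm1.
rewrite -[v]add0r memv_add ?mem0v //; apply: (subvP (gcomp_gpos _)) vq; lia.
Qed.

Lemma br_gpos u v : u \in gpos -> v \in gpos -> br u v \in gpos.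
Proof.
move=> upos vpos; move: u upos.
apply: gpos_ind => [|u1 u2|p p_ge0 u up]; first by rewrite br0l mem0v.
  by rewrite brDl; apply: rpredD.
move: v vpos; apply: gpos_ind => [|v1 v2|q q_ge0 v vq]; first by rewrite br0r mem0v.
  by rewrite brDr; apply: rpredD.
by apply: (subvP (gcomp_gpos _)) (br_gcomp up vq); apply: addr_ge0.
Qed.

Definition gpos_step (S : {vspace V}) : {vspace V} := (S + brv gpos S)%VS.
Definition gpos_closure (S : {vspace V}) : {vspace V} := iter (\dim {:V}) gpos_step S.

Lemma sub_gpos_closure (S : {vspace V}) : (S <= gpos_closure S)%VS.
Proof.
rewrite /gpos_closure; elim: (\dim {:V}) => //= n /subv_trans-> //.
exact: addvSl.
Qed.

Lemma gpos_closure_min (S B : {vspace V}) : (S <= B)%VS ->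
  (forall u v, u \in gpos -> v \in B -> br u v \in B) -> (gpos_closure S <= B)%VS.
Proof.
move=> SB Bstable; rewrite /gpos_closure; elim: (\dim {:V}) => //= n IHn.
rewrite subv_add IHn; apply/subvP; apply: brv_ind => [|u v|u v upos vn].
- exact: mem0v.
- exact: rpredD.
by apply: Bstable upos (subvP IHn _ vn).
Qed.

Lemma br_gpos_closure (S : {vspace V}) u v :
  u \in gpos -> v \in gpos_closure S -> br u v \in gpos_closure S.
Proof.
move=> upos vS; rewrite /gpos_closure -iter_dimv_fixed; last by move=> U; apply: addvSl.
by apply: (subvP (addvSr _ _)); apply: memv_brv.
Qed.

Lemma gpos_step_m1 (S : {vspace V}) :
  (forall y v, y \in s (- 1) -> v \in S -> br y v \in S) ->
  forall y v, y \in s (- 1) -> v \in gpos_step S -> br y v \in gpos_step S.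
Proof.
move=> Sm1 y _ ym1 /memv_addP[v vS [w wbr ->]].
rewrite brDr rpredD //; first by rewrite (subvP (addvSl _ _)) ?Sm1.
move: w wbr; apply: brv_ind => [|w1 w2|u w upos wS]; first by rewrite br0r mem0v.
  by rewrite brDr; apply: rpredD.
move: u upos; apply: gpos_ind => [|u1 u2|q q_ge0]; first by rewrite br0l br0r mem0v.
  by rewrite brDl brDr; apply: rpredD.
apply: gcomp_pr_ind => [u1 u2|j u uq uj]; first by rewrite brDl brDr; apply: rpredD.
move: y ym1; apply: gcomp_pr_ind => [y1 y2|i y ym1 yi].
  by rewrite brDl; apply: rpredD.
(* [y, u] lies in s^-1 if u has degree 0, and in gpos otherwise. *)
rewrite (br_jacobi yi uj); apply: rpredD; last first.
  rewrite rpredZ // (subvP (addvSr _ _)) // memv_brv ?Sm1 //.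
  exact: (subvP (gcomp_gpos q_ge0)).
have yu := br_gcomp ym1 uq.
have [q0|q_ne0] := eqVneq q 0.
  by rewrite (subvP (addvSl _ _)) // Sm1 // -(addr0 (- 1)) -q0.
apply: (subvP (addvSr _ _)); apply: memv_brv wS; apply: (subvP (gcomp_gpos _)) yu; lia.
Qed.

Lemma gpos_closure_m1 (S : {vspace V}) :
  (forall y v, y \in s (- 1) -> v \in S -> br y v \in S) ->
  forall y v, y \in s (- 1) -> v \in gpos_closure S -> br y v \in gpos_closure S.
Proof. by rewrite /gpos_closure; elim: (\dim {:V}) => //= n IHn /IHn /gpos_step_m1. Qed.

Lemma gpos_closure_ideal (S : {vspace V}) :
  (forall y v, y \in s (- 1) -> v \in S -> br y v \in S) ->
  forall x v, v \in gpos_closure S -> br x v \in gpos_closure S.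
Proof.
move=> Sm1 x v vS; have : x \in (s (- 1) + gpos)%VS by rewrite gcomp_m1_gpos_full memvf.
case/memv_addP => y ym1 [u upos ->]; rewrite brDl rpredD //.
  exact: gpos_closure_m1.
exact: br_gpos_closure.
Qed.

Hypothesis simpleV : is_simple V0 V1 br.

Lemma ideal_sub_gpos_eq0 (I : {vspace V}) : (forall x y, y \in I -> br x y \in I) ->
  (I <= gpos)%VS -> I = 0%VS.
Proof.
move=> idI Ipos; have [//|IT] := ideal_trivial simpleV idI.
case/negP: gcomp_m1_neq0; rewrite -subv0; apply/subvP => y ym1.
by rewrite memv0 (gcomp_m1_gpos ym1) // (subvP Ipos) // IT memvf.
Qed.

Lemma gcomp_nonneg_eq0 k w : 0 <= k -> w \in s k ->
  (forall y, y \in s (- 1) -> br y w = 0) -> w = 0.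
Proof.
move=> k_ge0 wk w_m1.
have line_m1 y v : y \in s (- 1) -> v \in <[w]>%VS -> br y v \in <[w]>%VS.
  by move=> ym1 /vlineP[c ->]; rewrite brZr w_m1 // scaler0 mem0v.
have cl0 : gpos_closure <[w]> = 0%VS.
  apply: ideal_sub_gpos_eq0; first exact: gpos_closure_ideal.
  apply: gpos_closure_min; last exact: br_gpos.
  by rewrite -memvE (subvP (gcomp_gpos k_ge0)).
by apply/eqP; rewrite -memv0 -cl0 (subvP (sub_gpos_closure _)) ?memv_line.
Qed.

Lemma gcomp0_irreducible_m1 : irreducible_G br (s 0) (s (- 1)).
Proof.
split; first exact: gcomp_m1_neq0.
move=> W Wm1 W0.
have W_m1 y v : y \in s (- 1) -> v \in W -> br y v \in W.
  move=> ym1 vW; have := br_gcomp ym1 (subvP Wm1 _ vW).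
  by rewrite gcomp_lt_m1 // memv0 => /eqP ->; rewrite mem0v.
have W_gpos u v : u \in gpos -> v \in (W + gpos)%VS -> br u v \in (W + gpos)%VS.
  move=> upos /memv_addP[w wW [n npos ->]]; rewrite brDr rpredD //; last first.
    by rewrite (subvP (addvSr _ _)) ?br_gpos.
  move: u upos; apply: gpos_ind => [|u1 u2|q q_ge0 u uq]; first by rewrite br0l mem0v.
    by rewrite brDl; apply: rpredD.
  have [q0|q_ne0] := eqVneq q 0; first by rewrite (subvP (addvSl _ _)) // W0 // -q0.
  have uw := br_gcomp uq (subvP Wm1 _ wW).
  apply: (subvP (addvSr _ _)); apply: (subvP (gcomp_gpos _)) uw; lia.
have [cl0|clT] := ideal_trivial simpleV (gpos_closure_ideal W_m1).
  by left; apply/eqP; rewrite -subv0 -cl0 sub_gpos_closure.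
right; apply/eqP; rewrite eqEsubv Wm1; apply/subvP => v vm1.
have : v \in (W + gpos)%VS.
  by rewrite (subvP (gpos_closure_min (addvSl _ _) W_gpos)) // clT memvf.
case/memv_addP => w wW [n npos vE].
have nm1 : n \in s (- 1).
  have -> : n = v - w by rewrite vE addrC addKr.
  by rewrite rpredB // (subvP Wm1).
by rewrite vE (gcomp_m1_gpos nm1 npos) addr0.
Qed.

Lemma gcomp_eq0_up m n : 0 <= m -> s m = 0%VS -> s (m + n%:Z) = 0%VS.
Proof.
move=> m_ge0 sm0; elim: n => [|n IHn]; first by rewrite addr0.
apply/eqP; rewrite -subv0; apply/subvP => v vn; rewrite memv0; apply/eqP.
apply: (gcomp_nonneg_eq0 _ vn); first lia.
move=> y ym1; have := br_gcomp ym1 vn.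
rewrite (_ : - 1 + _ = m + n%:Z); last lia.
by rewrite IHn memv0 => /eqP.
Qed.

Lemma gcomp0_neq0 : s 0 != 0%VS.
Proof.
apply/eqP => s00; have [x [y]] := nonabelian simpleV.
have gpos0 : gpos = 0%VS.
  apply/eqP; rewrite -subv0; apply/subvP.
  apply: gpos_ind => [|u v|q q_ge0 v]; [exact: mem0v | exact: rpredD |].
  by rewrite -(gez0_abs q_ge0) -[Posz _]add0r gcomp_eq0_up.
have m1T : s (- 1) = fullv by rewrite -gcomp_m1_gpos_full gpos0 addv0.
have : br x y \in s (- 1 + - 1) by apply: br_gcomp; rewrite m1T memvf.
by rewrite gcomp_lt_m1 // memv0 => /eqP ->; rewrite eqxx.
Qed.

Lemma gcomp1_neq0 : s 1 != 0%VS.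
Proof.
apply/eqP => s10.
have gpos_s0 : (gpos <= s 0)%VS.
  apply/subvP; apply: gpos_ind => [|u v|q q_ge0 v vq]; [exact: mem0v | exact: rpredD |].
  have [q0|q_ne0] := eqVneq q 0; first by rewrite -q0.
  move: vq; rewrite (_ : q = 1 + `|q - 1|%N%:Z); last by lia.
  by rewrite gcomp_eq0_up // memv0 => /eqP ->; rewrite mem0v.
have m1_ideal x y : y \in s (- 1) -> br x y \in s (- 1).
  move=> ym1; have : x \in (s (- 1) + gpos)%VS by rewrite gcomp_m1_gpos_full memvf.
  case/memv_addP => x1 x1m1 [x2 x2pos ->]; rewrite brDl rpredD //.
    have := br_gcomp x1m1 ym1.
    by rewrite gcomp_lt_m1 // memv0 => /eqP ->; rewrite mem0v.
  by rewrite -[- 1]add0r br_gcomp ?(subvP gpos_s0).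
have [m10|m1T] := ideal_trivial simpleV m1_ideal.
  by move: gcomp_m1_neq0; rewrite m10 eqxx.
move/eqP: gcomp0_neq0; apply; apply/eqP; rewrite -subv0; apply/subvP => v v0.
have vpos : v \in gpos by apply: (subvP (gcomp_gpos (lexx 0))).
by rewrite memv0 (gcomp_m1_gpos _ vpos) ?m1T ?memvf.
Qed.

Lemma gcomp_m1_invariant_eq0 x : x \in s (- 1) ->
  (forall y, y \in s 0 -> br y x = 0) -> x = 0.
Proof.
move=> xm1 x_inv; have [_ irr] := gcomp0_irreducible_m1.
have [x0|xT] : <[x]>%VS = 0%VS \/ <[x]>%VS = s (- 1).
  apply: irr; first by rewrite -memvE.
  by move=> a _ a0 /vlineP[c ->]; rewrite brZr x_inv // scaler0 mem0v.
  by apply/eqP; rewrite -memv0 -x0 memv_line.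
have x_comm u : u \in s 0 -> br x u = 0.
  move=> u0; apply: br_eq0_pr => i j.
  apply: (br_eq0C (pr_mem _ _) (pr_mem _ _)); apply: br_pr_r_eq0 (pr_mem _ _) _.
  by apply: x_inv; apply: pr_gcomp.
exfalso; move/eqP: gcomp0_neq0; apply; apply/eqP; rewrite -subv0.
apply/subvP => u u0.
rewrite memv0; apply/eqP; apply: (gcomp_nonneg_eq0 (lexx 0) u0) => y.
by rewrite -xT => /vlineP[c ->]; rewrite brZl x_comm // scaler0.
Qed.

Lemma ecomp_gcomp p (f : 'End(V)) i :
  (forall q v, v \in s q -> f v \in s (q + p)) ->
  forall q v, v \in s q -> ecomp i f v \in s (q + p).
Proof.
move=> f_deg q v vq; rewrite sum_lfunE big_bool !comp_lfunE /=.
by rewrite rpredD // pr_gcomp // f_deg // pr_gcomp.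
Qed.

Lemma ecomp_gcomp_eq0 (f : 'End(V)) i q : (forall v, v \in s q -> f v = 0) ->
  forall v, v \in s q -> ecomp i f v = 0.
Proof.
move=> f0 v vq; rewrite sum_lfunE big_bool !comp_lfunE /=.
by rewrite !f0 ?pr_gcomp // !linear0 addr0.
Qed.

Lemma sder_nonneg_eq0 e (f : 'End(V)) p : 0 <= p -> is_sder V0 V1 br e f ->
  (forall q v, v \in s q -> f v \in s (q + p)) ->
  (forall y, y \in s (- 1) -> f y = 0) -> f = 0.
Proof.
move=> p_ge0 [_ f_br] f_deg f_m1.
(* [y, f v] = +-(f [y, v] - [f y, v]) for homogeneous y, so transitivity gives the
   vanishing of f degree by degree. *)
have f_up n v : v \in s (n%:Z - 1) -> f v = 0.
  elim: n v => [|n IHn] v vn; first by apply: f_m1; rewrite -[- 1]sub0r.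
  apply: (@gcomp_nonneg_eq0 (n%:Z + p)); first lia.
    by have := f_deg _ _ vn; rewrite (_ : n.+1%:Z - 1 + p = n%:Z + p) //; lia.
  apply: gcomp_pr_ind => [y1 y2 y1f y2f|j y ym1 yj].
    by rewrite brDl y1f y2f addr0.
  have yv : br y v \in s (n%:Z - 1).
    by have := br_gcomp ym1 vn; rewrite (_ : - 1 + (n.+1%:Z - 1) = n%:Z - 1) //; lia.
  have := f_br j y v yj; rewrite (f_m1 y ym1) br0l add0r (IHn _ yv).
  by move/esym/eqP; rewrite scaler_eq0 (negbTE (ssign_neq0 _ _)) => /eqP.
apply/lfunP => v; rewrite zero_lfunE; move: v.
apply: gcomp_ind => [|u v fu fv|q v vq]; first exact: linear0.
  by rewrite linearD /= fu fv addr0.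
have [q_lt|q_ge] := ltrP q (- 1).
  by move: vq; rewrite gcomp_lt_m1 // memv0 => /eqP ->; apply: linear0.
have q_eq : q = (absz (q + 1))%:Z - 1 by lia.
by apply: (f_up (absz (q + 1))); rewrite -q_eq.
Qed.

Lemma der_nonneg_eq0 p (x : 'End(V)) : 0 <= p -> in_der_deg V0 V1 br D p x ->
  (forall y, y \in s (- 1) -> sbr V0 V1 x (ad br y) = 0) -> x = 0.
Proof.
move=> p_ge0 [x_der x_deg] x_ad.
have x_m1 y : y \in s (- 1) -> x y = 0.
  move=> ym1; apply: (center_trivial_l simpleV) => v.
  by rewrite -(@sbr_ad x y v x_der) x_ad // zero_lfunE.
have [_ [x0 x1]] := x_der.
have ecomp_eq0 i : is_sder V0 V1 br i (ecomp i x) -> ecomp i x = 0.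
  move=> xi; apply: sder_nonneg_eq0 p_ge0 xi _ _; first exact: ecomp_gcomp.
  exact: ecomp_gcomp_eq0.
by rewrite -[x]ecomp_sum (ecomp_eq0 false) // (ecomp_eq0 true) // addr0.
Qed.

Lemma ad_in_der_deg y : y \in s (- 1) -> in_der_deg V0 V1 br D (- 1) (ad br y).
Proof.
by move=> ym1; split=> [|q v vq]; [exact: ad_der | rewrite adE addrC br_gcomp].
Qed.

Lemma inner_der_eq0 p (f : 'End(V)) : inner_grading V0 br D -> p < - 1 ->
  in_der_deg V0 V1 br D p f -> f = 0.
Proof.
case=> h [h0 Dh] p_lt [f_der f_deg].
have hh : br h h = 0.
  have /eqP := br_evenC h h0; rewrite -addr_eq0 -mulr2n -scaler_nat scaler_eq0.
  by rewrite pnatr_eq0 => /eqP.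
have fh : f h = 0.
  apply/eqP; rewrite -memv0 -(gcomp_lt_m1 p_lt) -[p]add0r f_deg //.
  by rewrite mem_eigsp Dh hh scale0r.
apply/lfunP => v; rewrite zero_lfunE; move: v.
apply: gcomp_ind => [|u v fu fv|q v vq]; first exact: linear0.
  by rewrite linearD /= fu fv addr0.
have := der_br_even v f_der h0; rewrite fh br0l add0r -!Dh.
rewrite (gcompE vq) (gcompE (f_deg _ _ vq)) linearZ /= => /eqP.
rewrite -subr_eq0 -scalerBl rmorphD /= opprD addrA subrr sub0r scaleNr oppr_eq0.
by rewrite scaler_eq0 intr_eq0 => /orP[/eqP p0|/eqP //]; move: p_lt; rewrite p0.
Qed.

Lemma der_deg_eq0_large n (f : 'End(V)) :
  ((\max_(q <- r) `|q|%N).+2 <= n)%N ->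
  in_der_deg V0 V1 br D (- n%:Z) f -> f = 0.
Proof.
move=> n_large [_ f_deg]; apply/lfunP => v; rewrite zero_lfunE; move: v.
apply: gcomp_ind => [|u v fu fv|q v vq]; first exact: linear0.
  by rewrite linearD /= fu fv addr0.
have [qr|/gcomp_eq0 q0] := boolP (q \in r); last first.
  by move: vq; rewrite q0 memv0 => /eqP ->; apply: linear0.
apply/eqP; rewrite -memv0 -(@gcomp_lt_m1 (q - n%:Z)) ?f_deg //.
have := @leq_bigmax_seq _ r xpredT (fun q : int => `|q|%N) q qr isT.
move: n_large; set M := \max_(_ <- r | _) _; lia.
Qed.

Lemma der_depth : exists d : int, der_has_depth V0 V1 br D d /\ 1 <= d /\
  (inner_grading V0 br D -> d = 1).
Proof.
pose Pn n := exists f, in_der_deg V0 V1 br D (- n%:Z) f /\ f != 0.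
have P1 : Pn 1%N.
  have /subvPn[y ym1] : ~~ (s (- 1) <= 0)%VS by rewrite subv0 gcomp_m1_neq0.
  rewrite memv0 => y0; exists (ad br y).
  by split; [exact: ad_in_der_deg | exact: (ad_neq0 simpleV y0)].
have Pn_bound n : Pn n -> (n <= (\max_(q <- r) `|q|%N).+1)%N.
  case=> f [f_der f0]; rewrite leqNgt; apply: contra f0 => n_large.
  by apply/eqP; apply: der_deg_eq0_large f_der.
have [d [Pd d_max]] := bounded_has_max P1 Pn_bound.
have d_ge1 := d_max 1%N P1.
exists d%:Z; split; last split; first split=> // p p_lt f f_der.
- have [//|f0] := eqVneq f 0.
  have p_eq : p = - (absz p)%:Z by lia.
  have /d_max : Pn (absz p) by exists f; rewrite -p_eq.
  lia.
- lia.
move=> inner; have [f [f_der f0]] := Pd.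
have [d_le1|d_gt1] := leqP d 1.
  by congr Posz; apply/eqP; rewrite eqn_leq d_le1.
by move/eqP: f0; case; apply: inner_der_eq0 inner _ f_der; lia.
Qed.
End Grading.
End LieSuperalgebra.

Local Open Scope complex_scope.

Theorem lemma3p10 (R : realType) (V : vectType R[i])
    (V0 V1 : {vspace V}) (br : V -> V -> V) (D : 'End(V)) :
  is_lie_superalgebra V0 V1 br ->
  is_simple V0 V1 br ->
  is_grading_operator V0 V1 br D ->
  has_depth D 1 ->
  [/\ (* (i) *)
      (forall (p : int) (x : 'End(V)), 0 <= p -> in_der_deg V0 V1 br D p x ->
         (forall y, y \in gcomp D (-1) -> sbr V0 V1 x (ad br y) = 0) -> x = 0),
      (* (ii) *)
      gcomp D 0 != 0%VS /\ gcomp D 1 != 0%VS,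
      (* (iii) *)
      irreducible_G br (gcomp D 0) (gcomp D (-1)),
      (* (iv) *)
      (exists d : int, der_has_depth V0 V1 br D d /\ 1 <= d /\
         (inner_grading V0 br D -> d = 1)) &
      (* (v) *)
      (forall x, x \in gcomp D (-1) ->
         (forall y, y \in gcomp D 0 -> br y x = 0) -> x = 0)].
Proof.
move=> lieV simpleV [Dder [r Dspec]] depthD; split.
- exact: (der_nonneg_eq0 lieV Dder Dspec depthD simpleV).
- exact: (conj (gcomp0_neq0 lieV Dder Dspec depthD simpleV)
                (gcomp1_neq0 lieV Dder Dspec depthD simpleV)).
- exact: (gcomp0_irreducible_m1 lieV Dder Dspec depthD simpleV).
- exact: (der_depth lieV Dder Dspec depthD simpleV).
- exact: (gcomp_m1_invariant_eq0 lieV Dder Dspec depthD simpleV).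
Qed.
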